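(* Let $H$, $G$, $R$ be finite simple connected graphs such that $H$ is an induced subgraph of $G$ and $G$ is an induced subgraph of $R$, with $\mathrm{diam}(H)=\mathrm{diam}(G)=2$. If $\beta(R)=n(R)-t$ and $\beta(H)=n(H)-t$ for some positive integer $t$, then $\beta(G)=n(G)-t$.
   Context: $n(X)$ denotes the number of vertices of a graph $X$. For an ordered set $W=\{w_1,\dots,w_k\}$ of vertices of a connected graph $X$, $r(v|W)=(d_X(v,w_1),\dots,d_X(v,w_k))$ with $d_X$ the shortest-path distance; $W$ is a resolving set if distinct vertices have distinct vectors $r(\cdot|W)$, and $\beta(X)$, the metric dimension, is the minimum size of a resolving set. *)

From mathcomp Require Import all_boot.
Set Implicit Arguments. Unset Strict Implicit. Unset Printing Implicit Defensive.

Section Graphs.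
Variable V : finType.
Variable e : rel V.

Definition simple_graph := symmetric e /\ irreflexive e.

Definition connected_graph := forall x y : V, connect e x y.

Definition walk_of_length (n : nat) (x y : V) : bool :=
  [exists p : n.-tuple V, path e x p && (last x p == y)].

(* shortest-path distance: least n with a walk of length n from x to y
   (in a connected graph such n exists and is < #|V|; otherwise #|V|) *)
Definition gdist (x y : V) : nat :=
  find (fun n => walk_of_length n x y) (iota 0 #|V|).

Definition diam : nat := \max_(x : V) \max_(y : V) gdist x y.

Definition resolvingb (W : {set V}) : bool :=
  [forall u, forall v, [forall w in W, gdist u w == gdist v w] ==> (u == v)].

Definition metric_dim : nat :=
  #|[arg min_(W < [set: V] | resolvingb W) #|W|]|.

End Graphs.

Definition induced_embedding (VH VG : finType) (eH : rel VH) (eG : rel VG)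
  (f : VH -> VG) : Prop :=
  injective f /\ forall x y, eG (f x) (f y) = eH x y.

(* An induced subgraph H of diameter 2 is isometric in G.  Hence for a
   resolving set W of H, the set W together with all vertices of G outside H
   resolves G, so n(G) - β(G) >= n(H) - β(H).  Along H <= G <= R the quantity
   n - β is therefore monotone, and it takes the value t at both ends. *)
From mathcomp Require Import all_boot.
From mathcomp Require Import zify.
Set Implicit Arguments. Unset Strict Implicit. Unset Printing Implicit Defensive.

Section Distance.
Variables (V : finType) (e : rel V).

Lemma walk_of_length0 x y : walk_of_length e 0 x y = (x == y).
Proof.
apply/existsP/idP => [[p /andP[_ /eqP <-]]|/eqP <-].
  by case: p => [[|]].
by exists [tuple]; rewrite /= eqxx.
Qed.

Lemma walk_of_length1 x y : walk_of_length e 1 x y = e x y.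
Proof.
apply/existsP/idP => [[p]|exy].
  by case: p => [[|z [|]]] //= _ /andP[/andP[exz _] /eqP <-].
by exists [tuple y]; rewrite /= exy eqxx.
Qed.

Lemma gdist_le_diam x y : gdist e x y <= diam e.
Proof.
apply: leq_trans (leq_bigmax x).
exact: (leq_bigmax (F := fun y => gdist e x y) y).
Qed.

Hypothesis conn : connected_graph e.

Lemma has_walk_of_length x y :
  has (fun n => walk_of_length e n x y) (iota 0 #|V|).
Proof.
have /connectP[p pp ->] := conn x y.
have [p' pp' up' _] := shortenP pp.
apply/hasP; exists (size p').
  by rewrite mem_iota /=; have := max_card (mem (x :: p')); rewrite (card_uniqP up').
by apply/existsP; exists (in_tuple p'); rewrite /= pp' eqxx.
Qed.

Lemma gdist_walk x y : walk_of_length e (gdist e x y) x y.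
Proof.
have hw := has_walk_of_length x y.
have := nth_find 0 hw.
by rewrite nth_iota ?add0n //; move: hw; rewrite has_find size_iota.
Qed.

Lemma gdist_min n x y : walk_of_length e n x y -> gdist e x y <= n.
Proof.
move=> w; rewrite leqNgt; apply/negP => lt_n.
have := has_walk_of_length x y; rewrite has_find size_iota => lt_V.
by have := before_find 0 lt_n; rewrite nth_iota ?add0n ?w // (ltn_trans lt_n).
Qed.

Lemma gdist_eq0 x y : (gdist e x y == 0) = (x == y).
Proof.
apply/idP/eqP => [/eqP d0|->]; last by rewrite -leqn0 gdist_min ?walk_of_length0.
by have := gdist_walk x y; rewrite d0 walk_of_length0 => /eqP.
Qed.

Lemma resolving_mem (W : {set V}) u v :
  u \in W -> (forall w, w \in W -> gdist e u w = gdist e v w) -> u = v.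
Proof.
move=> uW dW; apply/eqP; rewrite eq_sym -gdist_eq0 -dW //.
by rewrite gdist_eq0.
Qed.

Lemma resolving_setT : resolvingb e [set: V].
Proof.
apply/forallP => u; apply/forallP => v; apply/implyP => /forallP dT; apply/eqP.
apply: (resolving_mem (in_setT u)) => w _.
by apply/eqP; move/implyP: (dT w); apply; rewrite in_setT.
Qed.

Lemma metric_dim_resolving :
  exists2 W, resolvingb e W & #|W| = metric_dim e.
Proof.
rewrite /metric_dim; case: arg_minnP => [|W rW _]; last by exists W.
exact: resolving_setT.
Qed.

Lemma metric_dim_min W : resolvingb e W -> metric_dim e <= #|W|.
Proof.
rewrite /metric_dim => rW; case: arg_minnP => [|W' _ minW']; last exact: minW'.
exact: resolving_setT.
Qed.

End Distance.

Section InducedSubgraph.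
Variables (VH VG : finType) (eH : rel VH) (eG : rel VG) (f : VH -> VG).
Hypothesis f_ind : induced_embedding eH eG f.

Lemma walk_of_length_embedding n x y :
  walk_of_length eH n x y -> walk_of_length eG n (f x) (f y).
Proof.
case: f_ind => _ ef /existsP[p /andP[pp /eqP <-]].
apply/existsP; exists (map_tuple f p); rewrite /= path_map last_map eqxx andbT.
by rewrite (@eq_path _ _ eH) // => a b; rewrite /relpre ef.
Qed.

Hypotheses (cH : connected_graph eH) (cG : connected_graph eG).
Hypothesis diamH : diam eH <= 2.

(* A G-distance of 0 or 1 is read off in H because the embedding is induced;
   a G-distance of at least 2 cannot be smaller than the H-distance. *)
Lemma gdist_embedding x y : gdist eG (f x) (f y) = gdist eH x y.
Proof.
have dH2 : gdist eH x y <= 2 := leq_trans (gdist_le_diam eH x y) diamH.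
apply/eqP; rewrite eqn_leq gdist_min ?walk_of_length_embedding ?gdist_walk //=.
have := gdist_walk cG (f x) (f y).
case: (gdist eG (f x) (f y)) => [|[|m]] w.
- rewrite walk_of_length0 (inj_eq f_ind.1) in w.
  by rewrite leqn0 gdist_eq0.
- by rewrite walk_of_length1 f_ind.2 in w; rewrite gdist_min ?walk_of_length1.
- exact: leq_trans dH2 _.
Qed.

Lemma resolving_embedding W :
  resolvingb eH W -> resolvingb eG (~: [set f x | x in ~: W]).
Proof.
move=> rW; set W' := ~: _.
apply/forallP => u; apply/forallP => v; apply/implyP => /forallP dW'; apply/eqP.
have {}dW' w : w \in W' -> gdist eG u w = gdist eG v w.
  by move=> wW'; apply/eqP; have := dW' w; rewrite wW'.
have [uW'|] := boolP (u \in W'); first exact: (resolving_mem cG uW' dW').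
have [vW'|] := boolP (v \in W').
  by move=> _; apply/esym/(resolving_mem cG vW') => w /dW'.
rewrite !inE !negbK => /imsetP[y _ uy] /imsetP[x _ vx]; subst u v.
congr f; apply/eqP; move/forallP: rW => /(_ x) /forallP /(_ y) /implyP; apply.
apply/forall_inP => w wW.
have fwW' : f w \in W' by rewrite !inE (mem_imset _ _ f_ind.1) inE negbK.
by rewrite -!gdist_embedding (dW' _ fwW').
Qed.

Lemma metric_dim_embedding :
  metric_dim eG + #|VH| <= #|VG| + metric_dim eH.
Proof.
have [W rW <-] := metric_dim_resolving cH.
have := metric_dim_min cG (resolving_embedding rW).
have := cardsC [set f x | x in ~: W]; rewrite card_imset; last exact: f_ind.1.
have := cardsC W; lia.
Qed.

End InducedSubgraph.

Theorem corollary2p7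
  (VH VG VR : finType) (eH : rel VH) (eG : rel VG) (eR : rel VR)
  (sH : simple_graph eH) (sG : simple_graph eG) (sR : simple_graph eR)
  (cH : connected_graph eH) (cG : connected_graph eG) (cR : connected_graph eR)
  (f : VH -> VG) (g : VG -> VR)
  (hf : induced_embedding eH eG f) (hg : induced_embedding eG eR g)
  (dH : diam eH = 2) (dG : diam eG = 2)
  (t : nat) (ht : 0 < t)
  (bR : metric_dim eR + t = #|VR|) (bH : metric_dim eH + t = #|VH|) :
  metric_dim eG + t = #|VG|.
Proof.
have HG := metric_dim_embedding hf cH cG (eq_leq dH).
have GR := metric_dim_embedding hg cG cR (eq_leq dG).
lia.
Qed.
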